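(* Let $P\subseteq S_n$ be a permutation array with Hamming distance ${\rm hd}(P)=d$. Then $|P^{{\sf CT}^m}|=|P|$ for every positive integer $m<d/3$.
   Context: $S_n$ is the symmetric group on $\{0,1,\ldots,n-1\}$. A permutation array is a non-empty subset $P\subseteq S_n$. The Hamming distance of $\sigma,\tau\in S_n$ is ${\rm hd}(\sigma,\tau)=|\{x:\sigma(x)\neq\tau(x)\}|$, and ${\rm hd}(P)=\min\{{\rm hd}(\sigma,\tau):\sigma,\tau\in P,\ \sigma\neq\tau\}$. The contraction of $\sigma\in S_n$ is $\sigma^{\sf CT}\in S_{n-1}$ (on $\{0,\ldots,n-2\}$) defined by $\sigma^{\sf CT}(x)=\sigma(n-1)$ if $x=\sigma^{-1}(n-1)$ and $\sigma^{\sf CT}(x)=\sigma(x)$ otherwise (i.e. delete $n-1$ from the cycle notation of $\sigma$). For $1\le m\le n-1$, $\sigma^{{\sf CT}^m}=(\sigma^{{\sf CT}^{m-1}})^{\sf CT}\in S_{n-m}$ with $\sigma^{{\sf CT}^1}=\sigma^{\sf CT}$, and $P^{{\sf CT}^m}=\{\sigma^{{\sf CT}^m}:\sigma\in P\}$. *)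

From mathcomp Require Import all_boot all_fingroup.
Set Implicit Arguments. Unset Strict Implicit. Unset Printing Implicit Defensive.

(* S_n = {perm 'I_n}, permutations of {0,...,n-1}. *)

Definition hd n (s t : {perm 'I_n}) : nat := #|[set x | s x != t x]|.

(* Minimum distance of a permutation array (default n when |P| = 1,
   an irrelevant convention: the theorem is trivial then). *)
Definition hdP n (P : {set {perm 'I_n}}) : nat :=
  \big[minn/n]_(s in P) \big[minn/n]_(t in P | t != s) hd s t.

(* Contraction: delete n from the cycle notation of s in S_(n+1). *)
Definition ct_fun n (s : {perm 'I_n.+1}) (x : 'I_n) : 'I_n :=
  let y := s (lift ord_max x) in
  let z := if y == ord_max then s ord_max else y in
  odflt x (unlift ord_max z).

Lemma ct_fun_lift n (s : {perm 'I_n.+1}) x :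
  lift ord_max (ct_fun s x) =
  (if s (lift ord_max x) == ord_max then s ord_max else s (lift ord_max x)).
Proof.
rewrite /ct_fun; set z := (if _ == _ then _ else _).
have zn : z != ord_max.
  rewrite /z; case: ifP => [/eqP E|/negbT //].
  apply/eqP => F; move: (neq_lift (@ord_max n) x); rewrite -(inj_eq (@perm_inj _ s)) E F eqxx //.
by case: unliftP zn => [w ->|->] //=; rewrite eqxx.
Qed.

Lemma ct_fun_inj n (s : {perm 'I_n.+1}) : injective (ct_fun s).
Proof.
move=> x1 x2 E; have := congr1 (lift ord_max) E; rewrite !ct_fun_lift.
case: eqP => E1; case: eqP => E2.
- by move=> _; apply: (@lift_inj _ ord_max); apply: (@perm_inj _ s); rewrite E1 E2.
- by move=> /perm_inj H; move: (neq_lift ord_max x2); rewrite -H eqxx.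
- by move=> /perm_inj H; move: (neq_lift ord_max x1); rewrite H eqxx.
- by move/perm_inj/lift_inj.
Qed.

Definition ct n (s : {perm 'I_n.+1}) : {perm 'I_n} := perm (@ct_fun_inj n s).

Fixpoint ctm m k : {perm 'I_(m + k)} -> {perm 'I_k} :=
  match m return {perm 'I_(m + k)} -> {perm 'I_k} with
  | 0 => fun s => s
  | m'.+1 => fun s => @ctm m' k (@ct (m' + k) s)
  end.

Definition ctmP m k (P : {set {perm 'I_(m + k)}}) : {set {perm 'I_k}} :=
  [set ctm s | s in P].
Arguments ctmP : clear implicits.

From mathcomp Require Import all_boot all_order all_fingroup.
Import Order.TTheory.

Set Implicit Arguments.
Unset Strict Implicit.
Unset Printing Implicit Defensive.

(* Contraction agrees with the original permutation except at the preimage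
   of the deleted point, so it brings two permutations closer by at most three
   positions (the deleted point and its two preimages).  After m contractions
   two members of P are still at distance at least hd(P) - 3m > 0. *)

Lemma ct_lift n (s : {perm 'I_n.+1}) x :
  s (lift ord_max x) != ord_max -> lift ord_max (ct s x) = s (lift ord_max x).
Proof. by rewrite permE ct_fun_lift => /negbTE ->. Qed.

Lemma hd_refl n (s : {perm 'I_n}) : hd s s = 0.
Proof. by apply/eqP; rewrite cards_eq0; apply/eqP/setP => x; rewrite !inE eqxx. Qed.

Lemma hd_ct n (s t : {perm 'I_n.+1}) : hd s t <= hd (ct s) (ct t) + 3.
Proof.
have sub : [set x | s x != t x] \subset
    [set ord_max; s^-1 ord_max; t^-1 ord_max]%g
      :|: lift ord_max @: [set y | ct s y != ct t y].
  apply/subsetP => x; rewrite !inE.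
  case: (unliftP ord_max x) => [y ->|->] sxtx; last by rewrite eqxx.
  case: (eqVneq (s (lift ord_max y)) ord_max) => sy.
    by rewrite -(canRL (permK s) sy) eqxx !orbT.
  case: (eqVneq (t (lift ord_max y)) ord_max) => ty.
    by rewrite -(canRL (permK t) ty) eqxx !orbT.
  apply/orP; right; apply: imset_f.
  by rewrite inE -(inj_eq (@lift_inj _ ord_max)) !ct_lift.
rewrite /hd addnC; apply: leq_trans (subset_leq_card sub) _.
apply: leq_trans (leq_card_setU _ _) (leq_add _ (leq_imset_card _ _)).
by rewrite (leq_trans (leq_card_setU _ _)) // cards2 cards1 addn1 !ltnS leq_b1.
Qed.

Lemma hd_ctm m k (s t : {perm 'I_(m + k)}) : hd s t <= hd (ctm s) (ctm t) + 3 * m.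
Proof.
elim: m s t => [|m IHm] s t /=; first by rewrite addn0.
apply: leq_trans (@hd_ct (m + k) s t) _.
by rewrite mulnS (addnC 3) addnA leq_add2r IHm.
Qed.

Lemma hdP_le n (P : {set {perm 'I_n}}) s t :
  s \in P -> t \in P -> t != s -> hdP P <= hd s t.
Proof.
move=> sP tP ts; rewrite /hdP -!minEnat.
apply: (@bigmin_inf _ nat) sP _.
by apply: (@bigmin_inf _ nat _ _ t); rewrite ?tP.
Qed.

Lemma ctm_inj_in m k (P : {set {perm 'I_(m + k)}}) :
  3 * m < hdP P -> {in P &, injective (@ctm m k)}.
Proof.
move=> ltP s t sP tP eq_ct; apply/eqP; apply: contraLR ltP => neq_st.
rewrite -leqNgt (leq_trans (hdP_le sP tP _)) 1?eq_sym //.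
by have := hd_ctm s t; rewrite eq_ct hd_refl.
Qed.

Theorem theorem3p1 (m k : nat) (P : {set {perm 'I_(m + k)}}) :
  P != set0 -> 0 < m -> 3 * m < hdP P -> #|ctmP m k P| = #|P|.
Proof. by move=> _ _ ltP; rewrite card_in_imset //; apply: ctm_inj_in. Qed.
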